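(* Let $\mathcal{A}=(\Sigma,Q,\delta,q_0,F)$ be a WDBA with $L:=L(\mathcal{A})$ and let $D\subseteq\Sigma^\omega$ be a regular set of don't care words with trivial right-congruence. Then $\mathcal{A}$ is $D$-minimal if and only if $\mathcal{A}$ has informative $D$-congruence.
   Context: A DBA $(\Sigma,Q,\delta,q_0,F)$ is a finite deterministic transition system (all states reachable) with $F\subseteq Q$, accepting $\alpha\in\Sigma^\omega$ iff some state of $F$ is visited infinitely often in the run on $\alpha$. A WDBA is a DBA in which every maximal strongly connected component of states is either contained in $F$ or disjoint from $F$. $L\equiv_D L'$ means $L\setminus D=L'\setminus D$. A WDBA $\mathcal{A}$ is $D$-minimal if there is no WDBA $\mathcal{B}$ with fewer states and $L(\mathcal{B})\equiv_D L(\mathcal{A})$. For $L\subseteq\Sigma^\omega$, $u\sim_L v$ iff for all $\alpha$: $u\alpha\in L\iff v\alpha\in L$; $D$ has trivial right-congruence if $\sim_D$ has exactly one class. $w\sim_{L,D}w'$ iff for all $\alpha\in\Sigma^\omega\setminus D$: $w\alpha\in L\iff w'\alpha\in L$; this is a right-congruence, and $\mathcal{T}_{L,D}$ is its induced transition system (states the classes $[u]$, initial $[\epsilon]$, transitions $[u]\xrightarrow{\sigma}[u\sigma]$). $\mathcal{A}$ has informative $D$-congruence if its transition system is isomorphic to $\mathcal{T}_{L(\mathcal{A}),D}$. *)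

From mathcomp Require Import all_boot.
Set Implicit Arguments. Unset Strict Implicit. Unset Printing Implicit Defensive.

Definition prepend (S : Type) (u : seq S) (a : nat -> S) : nat -> S :=
  fun n => if n < size u then nth (a 0) u n else a (n - size u).

Definition dstar (S Q : Type) (delta : Q -> S -> Q) (q : Q) (u : seq S) : Q :=
  foldl delta q u.

Definition drun (S Q : Type) (delta : Q -> S -> Q) (q0 : Q) (a : nat -> S) : nat -> Q :=
  fun n => dstar delta q0 (mkseq a n).

Definition DBA_lang (S : Type) (Q : finType) (delta : Q -> S -> Q) (q0 : Q)
  (F : {set Q}) : (nat -> S) -> Prop :=
  fun a => forall N, exists n, N <= n /\ drun delta q0 a n \in F.

Definition reaches (S Q : Type) (delta : Q -> S -> Q) (p q : Q) : Prop :=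
  exists u : seq S, dstar delta p u = q.

Definition all_reachable (S Q : Type) (delta : Q -> S -> Q) (q0 : Q) : Prop :=
  forall q, reaches delta q0 q.

Definition is_DBA (S : Type) (Q : finType) (delta : Q -> S -> Q) (q0 : Q)
  (F : {set Q}) : Prop := all_reachable delta q0.

(* WDBA: each maximal SCC (class of mutual reachability) is inside F or disjoint from F *)
Definition is_WDBA (S : Type) (Q : finType) (delta : Q -> S -> Q) (q0 : Q)
  (F : {set Q}) : Prop :=
  is_DBA delta q0 F /\
  forall p q, reaches delta p q -> reaches delta q p -> (p \in F) = (q \in F).

Definition D_equiv (S : Type) (D L L' : (nat -> S) -> Prop) : Prop :=
  forall a, ~ D a -> (L a <-> L' a).

Definition D_minimal (S : finType) (Q : finType) (delta : Q -> S -> Q) (q0 : Q)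
  (F : {set Q}) (D : (nat -> S) -> Prop) : Prop :=
  ~ exists (QB : finType) (deltaB : QB -> S -> QB) (qB : QB) (FB : {set QB}),
      is_WDBA deltaB qB FB /\ #|QB| < #|Q| /\
      D_equiv D (DBA_lang deltaB qB FB) (DBA_lang delta q0 F).

Definition NBA_lang (S : Type) (P : finType) (I : {set P}) (Delta : P -> S -> P -> bool)
  (G : {set P}) : (nat -> S) -> Prop :=
  fun a => exists r : nat -> P, r 0 \in I /\ (forall n, Delta (r n) (a n) (r n.+1)) /\
     forall N, exists n, N <= n /\ r n \in G.

Definition omega_regular (S : finType) (D : (nat -> S) -> Prop) : Prop :=
  exists (P : finType) (I : {set P}) (Delta : P -> S -> P -> bool) (G : {set P}),
    forall a, D a <-> NBA_lang I Delta G a.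

Definition right_cong (S : Type) (L : (nat -> S) -> Prop) (u v : seq S) : Prop :=
  forall a, L (prepend u a) <-> L (prepend v a).

Definition trivial_right_congruence (S : Type) (D : (nat -> S) -> Prop) : Prop :=
  forall u v : seq S, right_cong D u v.

Definition right_cong_D (S : Type) (L D : (nat -> S) -> Prop) (w w' : seq S) : Prop :=
  forall a, ~ D a -> (L (prepend w a) <-> L (prepend w' a)).

Definition cls (S : Type) (L D : (nat -> S) -> Prop) (u : seq S) : seq S -> Prop :=
  fun w => right_cong_D L D w u.

(* The transition system (Q, delta, q0) is isomorphic to T_{L,D}
   (states: classes [u]; initial [eps]; transitions [u] -a-> [ua]):
   phi is a bijection from Q onto the set of classes, maps q0 to [eps]
   and commutes with the transitions. *)
Definition iso_to_T (S : Type) (Q : Type) (delta : Q -> S -> Q) (q0 : Q)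
  (L D : (nat -> S) -> Prop) : Prop :=
  exists phi : Q -> (seq S -> Prop),
    (forall q, exists u, phi q = cls L D u) /\
    (forall u, exists q, phi q = cls L D u) /\
    (forall p q, phi p = phi q -> p = q) /\
    phi q0 = cls L D [::] /\
    (forall q a u, phi q = cls L D u -> phi (delta q a) = cls L D (rcons u a)).

Definition informative_D_congruence (S : finType) (Q : finType) (delta : Q -> S -> Q)
  (q0 : Q) (F : {set Q}) (D : (nat -> S) -> Prop) : Prop :=
  iso_to_T delta q0 (DBA_lang delta q0 F) D.

From mathcomp Require Import all_boot boolp.

Set Implicit Arguments. Unset Strict Implicit. Unset Printing Implicit Defensive.

(* Since D is closed under adding and removing prefixes, "accepting the same
   words outside D" is a congruence on the states of A.  If it identifies two
   distinct states, quotient A by it and declare a strongly connected component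
   of the quotient accepting when the quotient's run on some word outside D
   accepted by A keeps returning to it.  The quotient is weak, smaller, and
   D-equivalent to A: were some word outside D accepted by the quotient but
   rejected by A, lifting the two runs to A would yield a walk that alternates
   forever between accepting and rejecting states, each reachable from the
   next, which a finite weak automaton cannot contain.  If instead the states
   of A are pairwise inequivalent, they correspond bijectively to the classes
   of ~_{L,D}, and any automaton D-equivalent to A has a state per class. *)

Definition wdrop (S : Type) (i : nat) (a : nat -> S) : nat -> S := fun n => a (i + n).

Lemma mkseq_prepend (S : Type) (u : seq S) (a : nat -> S) n :
  mkseq (prepend u a) (size u + n) = u ++ mkseq a n.
Proof.
apply: (@eq_from_nth _ (a 0)) => [|i]; first by rewrite size_cat !size_mkseq.
rewrite size_mkseq => lt_i; rewrite nth_mkseq // nth_cat /prepend.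
by case: ltnP => // le_u_i; rewrite nth_mkseq // ltn_subLR.
Qed.

Lemma prepend_nil (S : Type) (a : nat -> S) : prepend [::] a = a.
Proof. by apply: funext => n; rewrite /prepend subn0. Qed.

Lemma prepend_wdrop (S : Type) (a : nat -> S) i : prepend (mkseq a i) (wdrop i a) = a.
Proof.
apply: funext => n; rewrite /prepend size_mkseq.
by case: ltnP => [lt_n|le_n]; rewrite ?nth_mkseq // /wdrop subnKC.
Qed.

Lemma trivial_right_congruence_prepend (S : Type) (D : (nat -> S) -> Prop) u a :
  trivial_right_congruence D -> D (prepend u a) <-> D a.
Proof. by move=> trivD; rewrite -{2}(prepend_nil a); apply: trivD. Qed.

Definition inf_often (T : Type) (r : nat -> T) (x : T) : Prop :=
  forall N, exists n, N <= n /\ r n = x.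

Lemma finite_inf_often (T : finType) (r : nat -> T) (P : pred T) :
  (forall N, exists n, N <= n /\ P (r n)) -> exists x, P x /\ inf_often r x.
Proof.
move=> infP; apply: contrapT => /forallNP fin.
have ex_bound x : exists N, P x -> forall n, N <= n -> r n <> x.
  apply: contrapT => /forallNP unbounded; apply: (fin x); split.
    by apply: contrapT => nPx; apply: (unbounded 0).
  move=> N; apply: contrapT => /forallNP late; apply: (unbounded N) => _ n Nn rnx.
  by apply: (late n).
have [bound boundP] := choice ex_bound.
have [n [le_n Prn]] := infP (\max_x bound x).
exact: boundP (r n) Prn n (leq_trans (leq_bigmax _) le_n) erefl.
Qed.

Section Runs.

Variables (S : Type) (Q : finType) (d : Q -> S -> Q).

Lemma dstar_cat p u v : dstar d p (u ++ v) = dstar d (dstar d p u) v.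
Proof. exact: foldl_cat. Qed.

Lemma dstar_rcons p u x : dstar d p (rcons u x) = d (dstar d p u) x.
Proof. exact: foldl_rcons. Qed.

Lemma reaches_refl p : reaches d p p.
Proof. by exists [::]. Qed.

Lemma reaches_trans p q r : reaches d p q -> reaches d q r -> reaches d p r.
Proof. by move=> [u <-] [v <-]; exists (u ++ v); rewrite dstar_cat. Qed.

Lemma drun_prepend q u a n :
  drun d q (prepend u a) (size u + n) = drun d (dstar d q u) a n.
Proof. by rewrite /drun mkseq_prepend dstar_cat. Qed.

Lemma drun_reaches q a m n : m <= n -> reaches d (drun d q a m) (drun d q a n).
Proof.
move=> le_mn; exists (mkseq (wdrop m a) (n - m)).
have := drun_prepend q (mkseq a m) (wdrop m a) (n - m).
by rewrite prepend_wdrop size_mkseq subnKC.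
Qed.

Variable F : {set Q}.

Lemma DBA_lang_prepend q u a : DBA_lang d q F (prepend u a) <-> DBA_lang d (dstar d q u) F a.
Proof.
split=> acc N.
  have [n [le_n nF]] := acc (size u + N); exists (n - size u).
  rewrite leq_subRL ?(leq_trans (leq_addr _ _) le_n) //; split=> //.
  by rewrite -drun_prepend subnKC // (leq_trans (leq_addr _ _) le_n).
have [n [le_n nF]] := acc N; exists (size u + n).
by rewrite drun_prepend (leq_trans le_n (leq_addl _ _)).
Qed.

Lemma accepting_run_visits (T : Type) (h : Q -> T) s a z :
  DBA_lang d s F a -> inf_often (fun n => h (drun d s a n)) z ->
  exists f, [/\ reaches d s f, f \in F & exists2 t, reaches d f t & h t = z].
Proof.
move=> acc vis; have [m [_ mF]] := acc 0; have [n [le_mn nz]] := vis m.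
exists (drun d s a m); split=> //; first by exists (mkseq a m).
by exists (drun d s a n); first exact: drun_reaches.
Qed.

Lemma rejecting_run_visits (T : Type) (h : Q -> T) s a z :
  ~ DBA_lang d s F a -> inf_often (fun n => h (drun d s a n)) z ->
  exists g, [/\ reaches d s g, g \notin F & h g = z].
Proof.
move=> /existsNP [N rej] vis; have [n [le_n nz]] := vis N.
exists (drun d s a n); split=> //; first by exists (mkseq a n).
by apply/negP => nF; apply: rej; exists n.
Qed.

Hypothesis weakF : forall p q, reaches d p q -> reaches d q p -> (p \in F) = (q \in F).

Lemma weak_no_alternation (P : Q -> Prop) :
  (forall s, P s -> exists f g, [/\ reaches d s f, f \in F, reaches d f g, g \notin F &
                                    exists2 s', reaches d g s' & P s']) ->
  forall s, ~ P s.
Proof.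
move=> alternate s0 Ps0.
have ex_next s : exists s', P s -> P s' /\
    exists f g, [/\ reaches d s f, f \in F, reaches d f g, g \notin F & reaches d g s'].
  have [Ps|nPs] := EM (P s); last by exists s.
  have [f [g [sf fF fg gF [s' gs' Ps']]]] := alternate s Ps.
  by exists s' => _; split=> //; exists f, g.
have [next nextP] := choice ex_next.
pose x n := iter n next s0.
have Px n : P (x n) by elim: n => //= n /nextP[].
have x_reaches m k : reaches d (x m) (x (k + m)).
  elim: k => [|k IHk]; first exact: reaches_refl.
  have [_ [f [g [xf _ fg _ gx]]]] := nextP _ (Px (k + m)).
  exact: reaches_trans IHk (reaches_trans xf (reaches_trans fg gx)).
(* The iterates of [next] cycle, and a cycle through [f] and [g] contradicts weakness. *)
have /trajectP [i lt_i loop] := looping_order next s0.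
have [_ [f [g [xf fF fg gF gx]]]] := nextP _ (Px i).
have gf : reaches d g f.
  apply: reaches_trans gx (reaches_trans _ xf).
  have := x_reaches i.+1 (order next s0 - i.+1).
  by rewrite subnK // /x loop.
by move: gF; rewrite -(weakF fg gf) fF.
Qed.

End Runs.

Section Quotient.

Variables (S : Type) (Q : finType) (d : Q -> S -> Q) (e : rel Q).
Hypotheses (e_refl : reflexive e) (e_sym : symmetric e) (e_trans : transitive e).
Hypothesis e_cong : forall p q x, e p q -> e (d p x) (d q x).

Definition qrep q := odflt q [pick p | e q p].

Lemma qrep_rel q : e q (qrep q).
Proof. by rewrite /qrep; case: pickP => [//|/(_ q)]; rewrite e_refl. Qed.

Lemma qrep_eq p q : e p q -> qrep p = qrep q.
Proof.
move=> epq; rewrite /qrep (eq_pick (left_trans e_sym e_trans epq)).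
by case: pickP => [//|/(_ q)]; rewrite e_refl.
Qed.

Lemma qrep_idem q : qrep (qrep q) == qrep q.
Proof. by apply/eqP/esym/qrep_eq/qrep_rel. Qed.

Definition qstate : finType := Finite.clone {q : Q | qrep q == q} _.

Definition qproj q : qstate := exist _ (qrep q) (qrep_idem q).

Definition qdelta (x : qstate) a := qproj (d (val x) a).

Lemma qproj_val x : qproj (val x) = x.
Proof. by apply: val_inj; apply/eqP; apply: (valP x). Qed.

Lemma qprojP p q : reflect (qproj p = qproj q) (e p q).
Proof.
apply: (iffP idP) => [/qrep_eq eq_rep|/(congr1 val) /= eq_rep]; first exact: val_inj.
by apply: e_trans (qrep_rel p) _; rewrite eq_rep e_sym qrep_rel.
Qed.

Lemma qdstar_qproj q u : dstar qdelta (qproj q) u = qproj (dstar d q u).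
Proof.
elim: u q => [|x u IHu] q //=; rewrite -IHu; congr dstar.
by apply/qprojP/e_cong; rewrite e_sym qrep_rel.
Qed.

Lemma qproj_dstar_eq p q u :
  qproj p = qproj q -> qproj (dstar d p u) = qproj (dstar d q u).
Proof. by rewrite -!qdstar_qproj => ->. Qed.

Lemma qreaches_lift s y :
  reaches qdelta (qproj s) y -> exists2 t, reaches d s t & qproj t = y.
Proof. by case=> u <-; exists (dstar d s u); [exists u | rewrite qdstar_qproj]. Qed.

Lemma qreachable q0 : all_reachable d q0 -> all_reachable qdelta (qproj q0).
Proof.
move=> reach x; have [u q0u] := reach (val x).
by exists u; rewrite qdstar_qproj q0u qproj_val.
Qed.

Lemma card_qstate_lt p q : e p q -> p != q -> #|qstate| < #|Q|.
Proof.
move=> epq; apply: contraNT; rewrite card_sig -leqNgt => card_le.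
have all_fixed z : qrep z == z.
  apply: contraTT card_le => moved; rewrite -ltnNge -(cardC [pred x | qrep x == x]).
  by rewrite -[X in X < _]addn0 ltn_add2l; apply/card_gt0P; exists z.
by rewrite -(eqP (all_fixed p)) -(eqP (all_fixed q)) (qrep_eq epq).
Qed.

End Quotient.

Lemma right_cong_D_transfer (S : Type) (D L L' : (nat -> S) -> Prop) u v :
  trivial_right_congruence D -> D_equiv D L L' ->
  right_cong_D L D u v -> right_cong_D L' D u v.
Proof.
move=> trivD LL' uv a nDa.
have nD w : ~ D (prepend w a) by move/(trivial_right_congruence_prepend _ _ trivD).
by rewrite -(LL' _ (nD u)) -(LL' _ (nD v)); apply: uv.
Qed.

Lemma cls_eq (S : Type) (L D : (nat -> S) -> Prop) u v :
  right_cong_D L D u v -> cls L D u = cls L D v.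
Proof.
move=> uv; apply: funext => w; apply: propext.
by split=> wu a nDa; [rewrite -(uv a nDa) | rewrite (uv a nDa)]; apply: wu.
Qed.

Section StateEquivalence.

Variables (S : Type) (Q : finType) (d : Q -> S -> Q) (F : {set Q}).
Variable D : (nat -> S) -> Prop.

Definition state_equiv p q := D_equiv D (DBA_lang d p F) (DBA_lang d q F).

Lemma state_equiv_refl q : state_equiv q q.
Proof. by []. Qed.

Lemma state_equiv_sym p q : state_equiv p q -> state_equiv q p.
Proof. by move=> pq a nDa; apply: iff_sym; apply: pq. Qed.

Lemma state_equiv_trans p q r : state_equiv p q -> state_equiv q r -> state_equiv p r.
Proof. by move=> pq qr a nDa; apply: iff_trans (pq a nDa) (qr a nDa). Qed.

Lemma right_cong_D_dstar q0 u v :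
  right_cong_D (DBA_lang d q0 F) D u v <-> state_equiv (dstar d q0 u) (dstar d q0 v).
Proof. by split=> uv a nDa; have := uv a nDa; rewrite !DBA_lang_prepend. Qed.

Hypothesis trivD : trivial_right_congruence D.

Lemma state_equiv_delta p q x : state_equiv p q -> state_equiv (d p x) (d q x).
Proof.
move=> pq a nDa; have := pq (prepend [:: x] a).
by rewrite !DBA_lang_prepend trivial_right_congruence_prepend //; apply.
Qed.

Section Informative.

Variable q0 : Q.
Hypothesis reach : all_reachable d q0.

Definition state_class q : seq S -> Prop := fun w => state_equiv (dstar d q0 w) q.

Lemma state_class_dstar u : state_class (dstar d q0 u) = cls (DBA_lang d q0 F) D u.
Proof. by apply: funext => w; apply: propext; rewrite /cls right_cong_D_dstar. Qed.

Lemma state_class_equiv p q : state_class p = state_class q -> state_equiv p q.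
Proof.
have [u <-] := reach p => /(congr1 (fun C => C u)).
by rewrite /state_class => <-; apply: state_equiv_refl.
Qed.

Lemma informative_of_state_equiv_eq :
  (forall p q, state_equiv p q -> p = q) -> iso_to_T d q0 (DBA_lang d q0 F) D.
Proof.
move=> equiv_eq; have class_inj p q : state_class p = state_class q -> p = q.
  by move/state_class_equiv/equiv_eq.
exists state_class; split; [|split; [|split; [|split]]].
- by move=> q; have [u <-] := reach q; exists u; rewrite state_class_dstar.
- by move=> u; exists (dstar d q0 u); rewrite state_class_dstar.
- exact: class_inj.
- exact: (state_class_dstar [::]).
- by move=> q x u; rewrite -!state_class_dstar dstar_rcons => /class_inj ->.
Qed.

End Informative.

End StateEquivalence.

Lemma informative_card_le (S Q QB : finType) (d : Q -> S -> Q) (q0 : Q) (F : {set Q})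
    (dB : QB -> S -> QB) (qB : QB) (FB : {set QB}) (D : (nat -> S) -> Prop) :
  trivial_right_congruence D -> informative_D_congruence d q0 F D ->
  D_equiv D (DBA_lang dB qB FB) (DBA_lang d q0 F) -> #|Q| <= #|QB|.
Proof.
move=> trivD [phi [phi_cls [_ [phi_inj _]]]] BA.
have [word wordP] := choice phi_cls.
apply: (@leq_card _ _ (fun q => dstar dB qB (word q))) => p q Bpq.
apply: phi_inj; rewrite !wordP; apply: cls_eq.
apply: right_cong_D_transfer trivD BA _; apply/right_cong_D_dstar; rewrite Bpq.
exact: state_equiv_refl.
Qed.

Section Minimization.

Variables (S : Type) (Q : finType) (d : Q -> S -> Q) (q0 : Q) (F : {set Q}).
Variable D : (nat -> S) -> Prop.
Hypothesis weakF : forall p q, reaches d p q -> reaches d q p -> (p \in F) = (q \in F).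
Hypothesis trivD : trivial_right_congruence D.

Let e p q := `[< state_equiv d F D p q >].

Let e_refl : reflexive e.
Proof. by move=> q; apply/asboolP/state_equiv_refl. Qed.

Let e_sym : symmetric e.
Proof. by move=> p q; apply/asboolP/asboolP => /state_equiv_sym. Qed.

Let e_trans : transitive e.
Proof. by move=> q p r /asboolP pq /asboolP qr; apply/asboolP/(state_equiv_trans pq qr). Qed.

Let e_cong p q x : e p q -> e (d p x) (d q x).
Proof. by move=> /asboolP pq; apply/asboolP/state_equiv_delta. Qed.

Local Notation proj := (qproj e_refl e_sym e_trans).
Local Notation dq := (qdelta d e_refl e_sym e_trans).
Local Notation proj_dstar := (qdstar_qproj e_refl e_sym e_trans e_cong).
Local Notation projP := (qprojP e_refl e_sym e_trans).

(* Any state s projecting to z behaves, on a suffix of c, like the state A reaches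
   on c just before a visit of the quotient to z. *)
Lemma transfer_visits c z s :
  ~ D c -> inf_often (drun dq (proj q0) c) z -> proj s = z ->
  exists a, (DBA_lang d s F a <-> DBA_lang d q0 F c) /\
            inf_often (fun n => proj (drun d s a n)) z.
Proof.
move=> nDc vis sz; have [i [_ ciz]] := vis 0.
set u := mkseq c i; have size_u : size u = i by rewrite size_mkseq.
have c_ua : c = prepend u (wdrop i c) by rewrite prepend_wdrop.
have s_u : proj s = proj (dstar d q0 u) by rewrite sz -ciz /drun proj_dstar.
exists (wdrop i c); split.
  rewrite {2}c_ua DBA_lang_prepend; move/projP/asboolP: s_u; apply.
  by move=> nDa; apply: nDc; rewrite c_ua trivial_right_congruence_prepend.
move=> N; have [n [le_n cnz]] := vis (i + N); exists (n - i).
have le_in : i <= n := leq_trans (leq_addr _ _) le_n.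
split; first by rewrite leq_subRL.
rewrite -cnz /drun (qproj_dstar_eq e_cong _ s_u) proj_dstar; congr qproj.
by rewrite -/(drun _ _ _ _) -drun_prepend -c_ua size_u subnKC.
Qed.

Definition quotient_final : {set qstate e} :=
  [set x | `[< exists b y, [/\ ~ D b, DBA_lang d q0 F b, reaches dq x y, reaches dq y x
                              & inf_often (drun dq (proj q0) b) y] >]].

Lemma quotient_final_weak x y :
  reaches dq x y -> reaches dq y x -> (x \in quotient_final) = (y \in quotient_final).
Proof.
suff final_of_scc x' y' : reaches dq x' y' -> reaches dq y' x' ->
    x' \in quotient_final -> y' \in quotient_final.
  by move=> xy yx; apply/idP/idP; apply: final_of_scc.
move=> xy yx; rewrite !inE => /asboolP [b [z [nDb acc xz zx vis]]].
by apply/asboolP; exists b, z; split=> //; apply: reaches_trans; eassumption.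
Qed.

Lemma quotient_final_complete a :
  ~ D a -> DBA_lang d q0 F a -> DBA_lang dq (proj q0) quotient_final a.
Proof.
move=> nDa acc; have [y [_ vis]] : exists y, predT y /\ inf_often (drun dq (proj q0) a) y.
  by apply: finite_inf_often => N; exists N.
have yF : y \in quotient_final.
  by rewrite inE; apply/asboolP; exists a, y; split=> //; apply: reaches_refl.
by move=> N; have [n [le_n ny]] := vis N; exists n; split=> //; rewrite ny.
Qed.

Lemma quotient_final_sound a :
  ~ D a -> DBA_lang dq (proj q0) quotient_final a -> DBA_lang d q0 F a.
Proof.
move=> nDa /(@finite_inf_often _ _ (fun x => x \in quotient_final)) [x [xF visx]].
move: xF; rewrite inE => /asboolP [b [y [nDb accb xy yx visy]]].
apply: contrapT => rej.
apply: (weak_no_alternation weakF (P := fun s => proj s = y) _ (qproj_val _ _ _ y)) => s sy.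
have [b' [/iffRL accb' visb']] := transfer_visits nDb visy sy.
have [f [sf fF [t1 ft1 t1y]]] := accepting_run_visits (accb' accb) visb'.
have /(qreaches_lift e_cong) [t2 t1t2 t2x] : reaches dq (proj t1) x by rewrite t1y.
have [a' [/iffLR rej' visa']] := transfer_visits nDa visx t2x.
have [g [t2g gF gx]] := rejecting_run_visits (fun acc => rej (rej' acc)) visa'.
have /(qreaches_lift e_cong) [s' gs' s'y] : reaches dq (proj g) y by rewrite gx.
exists f, g; split=> //; last by exists s'.
exact: reaches_trans ft1 (reaches_trans t1t2 t2g).
Qed.

Lemma smaller_WDBA_of_state_equiv p q :
  all_reachable d q0 -> state_equiv d F D p q -> p != q ->
  exists (QB : finType) (dB : QB -> S -> QB) (qB : QB) (FB : {set QB}),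
    is_WDBA dB qB FB /\ #|QB| < #|Q| /\ D_equiv D (DBA_lang dB qB FB) (DBA_lang d q0 F).
Proof.
move=> reach pq neq_pq; exists (qstate e), dq, (proj q0), quotient_final.
split; [split|split].
- exact: qreachable.
- exact: quotient_final_weak.
- by apply: (card_qstate_lt e_refl e_sym e_trans _ neq_pq); apply/asboolP.
- by move=> a nDa; split; [apply: quotient_final_sound | apply: quotient_final_complete].
Qed.
End Minimization.

Theorem theorem4 (Sigma Q : finType) (delta : Q -> Sigma -> Q) (q0 : Q) (F : {set Q})
  (D : (nat -> Sigma) -> Prop) :
  is_WDBA delta q0 F ->
  omega_regular D ->
  trivial_right_congruence D ->
  (D_minimal delta q0 F D <-> informative_D_congruence delta q0 F D).
Proof.
move=> [reach weakF] _ trivD; split=> [minimal | informative].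
- apply: (informative_of_state_equiv_eq reach) => p q pq.
  have [//|neq_pq] := eqVneq p q.
  by case: minimal; apply: (smaller_WDBA_of_state_equiv weakF trivD reach pq neq_pq).
- move=> [QB [dB [qB [FB [_ [lt_QB BA]]]]]].
  by rewrite ltnNge (informative_card_le trivD informative BA) in lt_QB.
Qed.
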